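(* If $m$ is even, then $\mathrm{U}_m-\mathrm{U}_m^\top$ is invertible with inverse $(\mathrm{U}_m-\mathrm{U}_m^\top)^{-1}=\mathrm{Q}_m(\mathrm{U}_m-\mathrm{U}_m^\top)\mathrm{Q}_m$.
   Context: $\mathrm{U}_m\in\mathbb{R}^{m\times m}$ is the strictly upper triangular matrix with all entries above the diagonal equal to $1$, and $\mathrm{Q}_m$ is the $m\times m$ diagonal matrix with diagonal entries $(-1)^{i+1}$, $i=1,\dots,m$. *)

From mathcomp Require Import all_boot all_order all_algebra.
Set Implicit Arguments. Unset Strict Implicit. Unset Printing Implicit Defensive.
Import GRing.Theory Num.Theory.
Local Open Scope ring_scope.

Definition Umat (R : nzRingType) (m : nat) : 'M[R]_m :=
  \matrix_(i < m, j < m) (if (i < j)%N then 1 else 0).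

(* Q_m : diagonal with entries (-1)^(i+1) for 1-based i = 1..m,
   i.e. (-1)^i for 0-based index i: +1, -1, +1, ... *)
Definition Qmat (R : nzRingType) (m : nat) : 'M[R]_m :=
  \matrix_(i < m, j < m) (if i == j then (-1) ^+ (nat_of_ord i) else 0).

(* Write A = U - U^T, so that A i j is the sign of j - i, and
   c(i, k) = sum_j A i j (-1)^j A j k for the entries of A Q A; we show A Q A = Q,
   whence A^-1 = Q A Q since Q^2 = 1.  As A^T = -A, c is symmetric.  On the
   diagonal, c(i, i) = - sum_(j <> i) (-1)^j = (-1)^i because the full alternating
   sum vanishes for m even.  Off the diagonal, columns k and k+1 of A differ by
   e_k + e_(k+1), so c(i, k+1) - c(i, k) = A i k (-1)^k + A i (k+1) (-1)^(k+1):
   this is -(-1)^i for k = i and 0 for k > i, hence c(i, k) = 0 for k > i.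
   Nothing beyond commutativity of the ring is used. *)

From mathcomp Require Import all_boot all_order all_algebra.
From mathcomp Require Import ring.

Set Implicit Arguments. Unset Strict Implicit. Unset Printing Implicit Defensive.
Import GRing.Theory.
Local Open Scope ring_scope.

Definition skewU (R : nzRingType) (m : nat) : 'M[R]_m := Umat R m - (Umat R m)^T.

Definition skew_sign (R : nzRingType) (i j : nat) : R := (i < j)%:R - (j < i)%:R.

Lemma sum_sign_even (R : pzRingType) (n : nat) :
  ~~ odd n -> \sum_(j < n) (-1) ^+ j = 0 :> R.
Proof.
move=> /negbTE n_even; rewrite -(odd_double_half n) n_even add0n.
elim: n./2 => [|h IH]; first by rewrite big_ord0.
by rewrite doubleS !big_ord_recr /= IH add0r exprS mulN1r subrr.
Qed.

Lemma sum_mul_eq_nat (R : pzSemiRingType) (n k : nat) (F : nat -> R) :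
  (k < n)%N -> \sum_(j < n) F j * (j == k :> nat)%:R = F k.
Proof.
move=> lt_kn; under eq_bigr do rewrite mulr_natr mulrb.
by rewrite -big_mkcond big_ord1_eq lt_kn.
Qed.

Section SkewSign.
Context {R : comNzRingType}.
Local Notation sk := (@skew_sign R).

Lemma skew_signC i j : sk j i = - sk i j.
Proof. by rewrite /skew_sign opprB. Qed.

Lemma skew_sign_lt i j : (i < j)%N -> sk i j = 1.
Proof. by move=> lt_ij; rewrite /skew_sign lt_ij ltnNge ltnW // subr0. Qed.

Lemma skew_sign_refl i : sk i i = 0.
Proof. by rewrite /skew_sign subrr. Qed.

Lemma skew_sign_sqr i j : sk i j * sk j i = - (i != j)%:R.
Proof.
rewrite /skew_sign; case: ltngtP => _ /=;
  by rewrite ?subr0 ?sub0r ?mul1r ?mulN1r ?opprK ?mulr0 ?oppr0.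
Qed.

Lemma skew_signSr j k : sk j k.+1 = sk j k + (j == k)%:R + (j == k.+1)%:R.
Proof.
rewrite /skew_sign ltnS; case: (ltngtP j k) => [jk|kj|->].
- by rewrite ltnNge (leqW (ltnW jk)) (ltn_eqF (ltn_trans jk (ltnSn k))) !addr0.
- rewrite ltn_neqAle kj andbT eq_sym.
  by case: (j == k.+1); rewrite /=; ring.
- by rewrite (leq_gtF (leqnSn k)) (ltn_eqF (ltnSn k)) !subr0 addr0 add0r.
Qed.

End SkewSign.

Section SkewQSkew.
Variables (R : comNzRingType) (m : nat).
Hypothesis m_even : ~~ odd m.
Local Notation sk := (@skew_sign R).

Definition skewQskew (i k : nat) : R := \sum_(j < m) sk i j * (-1) ^+ j * sk j k.

Lemma skewQskewC i k : skewQskew k i = skewQskew i k.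
Proof.
apply: eq_bigr => j _; rewrite (skew_signC k j) (skew_signC j i).
by rewrite mulNr mulrNN mulrAC [RHS]mulrAC [sk k j * _]mulrC.
Qed.

Lemma skewQskew_diag i : (i < m)%N -> skewQskew i i = (-1) ^+ i.
Proof.
move=> lt_im; pose i0 := Ordinal lt_im.
have sum_off : \sum_(j < m | j != i0) (-1) ^+ j = - (-1) ^+ i :> R.
  have := sum_sign_even R m_even.
  by rewrite (bigD1 i0) //= addrC => /eqP; rewrite addr_eq0 => /eqP.
rewrite /skewQskew (bigD1 i0) //= skew_sign_refl !mul0r add0r -[RHS]opprK -sum_off -sumrN.
apply: eq_bigr => j ne_ji.
by rewrite mulrC mulrA skew_sign_sqr ne_ji mulN1r.
Qed.

Lemma skewQskewSr i k : (k.+1 < m)%N ->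
  skewQskew i k.+1 = skewQskew i k + sk i k * (-1) ^+ k + sk i k.+1 * (-1) ^+ k.+1.
Proof.
move=> lt_km; rewrite /skewQskew.
under eq_bigr do rewrite skew_signSr mulrDr mulrDr.
by rewrite !big_split /= !(sum_mul_eq_nat (fun j => sk i j * (-1) ^+ j)) // ltnW.
Qed.

Lemma skewQskew_upper i k : (i <= k)%N -> (k < m)%N ->
  skewQskew i k = (i == k)%:R * (-1) ^+ i.
Proof.
elim: k => [|k IH].
  by rewrite leqn0 => /eqP -> lt_0m; rewrite skewQskew_diag // mul1r.
rewrite leq_eqVlt => /predU1P[-> lt_km|]; first by rewrite skewQskew_diag // eqxx mul1r.
move=> lt_ik1 lt_km; have le_ik : (i <= k)%N by rewrite -ltnS.
rewrite skewQskewSr // IH ?(ltnW lt_km) // (skew_sign_lt lt_ik1) (ltn_eqF lt_ik1).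
rewrite mul0r exprS mulN1r mul1r.
move: le_ik; rewrite leq_eqVlt => /predU1P[->|lt_ik].
  by rewrite eqxx skew_sign_refl mul0r mul1r addr0 subrr.
by rewrite (ltn_eqF lt_ik) skew_sign_lt // mul0r add0r mul1r subrr.
Qed.

End SkewQSkew.

Lemma Qmat_diag (R : nzRingType) (m : nat) :
  Qmat R m = diag_mx (\row_(i < m) (-1) ^+ i).
Proof.
by apply/matrixP => i j; rewrite !mxE; case: eqP => [->|]; rewrite ?mulr1n ?mulr0n.
Qed.

Lemma Qmat_sqr (R : nzRingType) (m : nat) : Qmat R m *m Qmat R m = 1%:M.
Proof.
rewrite Qmat_diag mul_diag_mx; apply/matrixP => i j.
by rewrite !mxE mulrnAr -expr2 sqrr_sign.
Qed.

Lemma skewU_sign (R : nzRingType) (m : nat) :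
  skewU R m = \matrix_(i, j) skew_sign R i j.
Proof.
by apply/matrixP => i j; rewrite !mxE /skew_sign; case: (i < j)%N; case: (j < i)%N.
Qed.

Lemma skewU_Qmat_skewU (R : comNzRingType) (m : nat) :
  ~~ odd m -> skewU R m *m Qmat R m *m skewU R m = Qmat R m.
Proof.
move=> m_even; apply/matrixP => i k.
have -> : (skewU R m *m Qmat R m *m skewU R m) i k = skewQskew R m i k.
  by rewrite Qmat_diag skewU_sign mul_mx_diag !mxE; apply: eq_bigr => j _; rewrite !mxE.
rewrite Qmat_diag !mxE.
wlog le_ik : i k / (i <= k)%N.
  move=> upper; case: (leqP i k) => [/upper //|/ltnW/upper].
  by rewrite skewQskewC eq_sym; case: eqP => [->|].
by rewrite skewQskew_upper ?mulr_natl.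
Qed.

Theorem skewU_inv (R : comUnitRingType) (m : nat) :
  ~~ odd m ->
  skewU R m \in unitmx /\ invmx (skewU R m) = Qmat R m *m skewU R m *m Qmat R m.
Proof.
move=> m_even; have skewU_mulV : skewU R m *m (Qmat R m *m skewU R m *m Qmat R m) = 1%:M.
  by rewrite !mulmxA skewU_Qmat_skewU // Qmat_sqr.
have [skewU_unit _] := mulmx1_unit skewU_mulV.
by split=> //; rewrite -[invmx _]mulmx1 -skewU_mulV mulKmx.
Qed.

Theorem corollary7p5 (R : realFieldType) (m : nat) :
  ~~ odd m ->
  (Umat R m - (Umat R m)^T) \in unitmx /\
  invmx (Umat R m - (Umat R m)^T) =
    Qmat R m *m (Umat R m - (Umat R m)^T) *m Qmat R m.
Proof. exact: skewU_inv. Qed.
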